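(* Let $G$ be a Hausdorff topological group, $Y$ a topological space with a topological partial action $\theta$ of $G$, and $X$ a nonempty compact space, with $\hat\theta$ the induced partial action on $C(X,Y)$. Then: (i) $G*Y$ is open in $G\times Y$ if and only if $G*C(X,Y)$ is open in $G\times C(X,Y)$; (ii) $\theta$ is nice if and only if $\hat\theta$ is nice.
   Context: A topological partial action of $G$ on $Y$ is a family $\{\theta_g\colon Y_{g^{-1}}\to Y_g\}_{g\in G}$ of homeomorphisms between open subsets of $Y$ with $Y_e=Y$, $\theta_e=\mathrm{id}_Y$, $\theta_{g^{-1}}=\theta_g^{-1}$ and $\theta_g\circ\theta_h$ a restriction of $\theta_{gh}$ for all $g,h$. Its domain is $G*Y=\{(g,y)\in G\times Y: y\in Y_{g^{-1}}\}$; $\theta$ is continuous if $G*Y\to Y$, $(g,y)\mapsto\theta_g(y)$, is continuous (subspace topology), and nice if it is continuous and $G*Y$ is open in $G\times Y$. $C(X,Y)$ carries the compact-open topology. The induced partial action $\hat\theta$ on $C(X,Y)$ has $C(X,Y)_g=\{f: f(X)\subset Y_g\}$ and $\hat\theta_g(f)=\theta_g\circ f$; its domain is $G*C(X,Y)=\{(g,f)\in G\times C(X,Y): f(X)\subset Y_{g^{-1}}\}$. *)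

From HB Require Import structures.
From mathcomp Require Import all_boot all_order all_algebra.
From mathcomp Require Import all_classical all_reals.
From mathcomp Require Import topology.
Set Implicit Arguments. Unset Strict Implicit. Unset Printing Implicit Defensive.
Local Open Scope classical_set_scope.

Record topological_group (G : topologicalType) (mul : G -> G -> G)
    (inv : G -> G) (e : G) : Prop := TopologicalGroup {
  tg_mulA : forall x y z, mul x (mul y z) = mul (mul x y) z;
  tg_mul1g : forall x, mul e x = x;
  tg_mulg1 : forall x, mul x e = x;
  tg_mulVg : forall x, mul (inv x) x = e;
  tg_mulgV : forall x, mul x (inv x) = e;
  tg_mul_cont : continuous (fun p : G * G => mul p.1 p.2);
  tg_inv_cont : continuous inv }.

(* A topological partial action of G on Z: D g is the open set Z_g, and
   theta g : Z -> Z is a total function whose restriction to Z_{g^-1} is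
   the partial map theta_g : Z_{g^-1} -> Z_g (values outside Z_{g^-1} are
   irrelevant).  theta_g is a homeomorphism Z_{g^-1} -> Z_g with inverse
   theta_{g^-1} (surjectivity and continuity of the inverse follow by
   applying the axioms to g^-1, since inv (inv g) = g). *)
Record topological_partial_action (G : topologicalType) (mul : G -> G -> G)
    (inv : G -> G) (e : G) (Z : topologicalType)
    (D : G -> set Z) (theta : G -> Z -> Z) : Prop := TopPartialAction {
  pa_open : forall g, open (D g);
  pa_De : D e = setT;
  pa_thetae : forall z, theta e z = z;
  pa_maps : forall g z, D (inv g) z -> D g (theta g z);
  pa_cont : forall g, {within D (inv g), continuous (theta g)};
  pa_inv : forall g z, D (inv g) z -> theta (inv g) (theta g z) = z;
  pa_comp : forall g h z, D (inv h) z -> D (inv g) (theta h z) ->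
     D (inv (mul g h)) z /\ theta (mul g h) z = theta g (theta h z) }.

Definition pa_domain (G : topologicalType) (inv : G -> G) (Z : topologicalType)
    (D : G -> set Z) : set (G * Z) :=
  [set p | D (inv p.1) p.2].

Definition pa_continuous (G : topologicalType) (inv : G -> G)
    (Z : topologicalType) (D : G -> set Z) (theta : G -> Z -> Z) : Prop :=
  {within pa_domain inv D, continuous (fun p : G * Z => theta p.1 p.2)}.

Definition pa_nice (G : topologicalType) (inv : G -> G)
    (Z : topologicalType) (D : G -> set Z) (theta : G -> Z -> Z) : Prop :=
  open (pa_domain inv D) /\ pa_continuous inv D theta.

Definition CXY (X Y : topologicalType) : topologicalType :=
  set_type [set f : {compact-open, X -> Y} | continuous f].

Definition induced_dom (G X Y : topologicalType) (D : G -> set Y) :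
    G -> set (CXY X Y) :=
  fun g => [set f : CXY X Y | forall x, D g (sval f x)].

(* Induced maps: hat theta_g f = theta_g \o f (whenever this is continuous,
   in particular on C(X,Y)_{g^-1}; the value elsewhere is irrelevant). *)
Definition induced_map (G X Y : topologicalType) (theta : G -> Y -> Y) :
    G -> CXY X Y -> CXY X Y :=
  fun g f =>
    match pselect (continuous (theta g \o sval f : {compact-open, X -> Y})) with
    | left H => exist _ (theta g \o sval f : {compact-open, X -> Y}) (mem_set H)
    | right _ => f
    end.

From HB Require Import structures.
From mathcomp Require Import all_boot all_order all_algebra.
From mathcomp Require Import all_classical all_reals.
From mathcomp Require Import topology.
Unset Printing Implicit Defensive.
Local Open Scope classical_set_scope.

(* The forward implications rest on the generalised tube lemma: if W is a
   neighbourhood of every point of {g} x K with K compact, then some U x V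
   with U a neighbourhood of g and V an open superset of K lies in W.  Applied
   to K = f(X), resp. to the compact images f(K) defining the compact-open
   topology, it produces the neighbourhoods of (g, f) in G x C(X,Y) needed for
   openness of G*C(X,Y) and for continuity of the induced action.  For the
   converse implications, Y embeds continuously in C(X,Y) as the constant
   maps: (g, y) |-> (g, cst y) pulls G*C(X,Y) back to G*Y (X is nonempty), and
   theta_g y is the value at any point of X of hat-theta_g (cst y). *)

Lemma compact_tube {G Y : topologicalType} (g : G) (K : set Y) (W : set (G * Y)) :
  compact K -> (forall y, K y -> nbhs (g, y) W) ->
  exists2 U, nbhs g U & exists2 V, open V /\ K `<=` V & U `*` V `<=` W.
Proof.
move=> /compact_near_coveringP cK KW.
pose tube_over U := [set y | exists2 V, open V /\ V y & U `*` V `<=` W].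
have tube_over_anti U1 U2 :
    U1 `<=` U2 -> K `<=` tube_over U2 -> K `<=` tube_over U1.
  move=> U12 KU2 y /KU2 [V oV U2VW].
  by exists V => // -[a b] [/U12 U2a Vb]; exact: U2VW.
(* compactness in near-covering form, indexed by small neighbourhoods of g *)
have [U gU KU] : exists2 U, nbhs g U & K `<=` tube_over U.
  apply/(near_powerset_filter_fromP _ tube_over_anti).
  apply: cK => y /KW [[A B] /= [gA yB] ABW].
  exists (interior B, [set U | U `<=` A]); first split => /=.
  - by apply: open_nbhs_nbhs; split; [exact: open_interior | exact: yB].
  - exact: small_set_sub.
  move=> [y' U'] /= [By' U'A]; exists (interior B).
    by split => //; exact: open_interior.
  by move=> [a b] /= [/U'A Aa /interior_subset Bb]; exact: ABW.
exists U => //; exists (tube_over U).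
  split=> //; rewrite openE => y [V [oV Vy] UVW].
  by apply: filterS (open_nbhs_nbhs (conj oV Vy)) => z Vz; exists V.
by move=> [a b] [Ua [V [_ Vb] UVW]]; apply: UVW.
Qed.

Lemma continuous_within_comp {T U V : topologicalType} {A : set U} {h : U -> V}
    {f : T -> U} :
  continuous f -> (forall t, A (f t)) -> {within A, continuous h} ->
  continuous (h \o f).
Proof.
move=> fc fA /subspace_continuousP hc t.
have ftA : f @ nbhs t --> within A (nbhs (f t)).
  by move=> P /(fc t); apply: (@filterS _ (nbhs t)) => s /(_ (fA s)).
exact: cvg_comp ftA (hc _ (fA t)).
Qed.

Section compact_open_CXY.
Context {X Y : topologicalType}.
Local Notation C := (CXY X Y).

Lemma CXY_continuous (f : C) : continuous (sval f).
Proof. by case: f => f /= /set_mem. Qed.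

Lemma compact_CXY_image (f : C) (K : set X) :
  compact K -> compact (sval f @` K).
Proof.
by apply: continuous_compact; apply: continuous_subspaceT; exact: CXY_continuous.
Qed.

Lemma nbhs_CXY_image_sub (f : C) (K : set X) (O : set Y) :
  compact K -> open O -> sval f @` K `<=` O ->
  nbhs f [set h : C | sval h @` K `<=` O].
Proof.
move=> cK oO fKO; apply: open_nbhs_nbhs; split => //.
by exists [set h | h @` K `<=` O] => //; exact: compact_open_open.
Qed.

Lemma cvg_CXY (F : set_system C) (f : C) : Filter F ->
  (forall K O, compact K -> open O -> sval f @` K `<=` O ->
     F [set h | sval h @` K `<=` O]) -> F --> f.
Proof.
move=> FF FKO U [_ /= [[A oA <-]]] /= Af /filterS; apply.
have : sval @ F --> (sval f : {compact-open, X -> Y}).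
  by apply/compact_open_cvgP => K O cK oO; exact: FKO.
by apply; apply: open_nbhs_nbhs.
Qed.

Definition CXY_cst (y : Y) : C :=
  exist _ (cst y : {compact-open, X -> Y}) (mem_set (@cst_continuous X Y y)).

Lemma CXY_cst_continuous : continuous CXY_cst.
Proof.
move=> y; apply: cvg_CXY => K O cK oO yKO.
have [[k Kk]|K0] := pselect (K !=set0).
  have Oy : O y by apply: yKO; exists k.
  by apply: filterS (open_nbhs_nbhs (conj oO Oy)) => z Oz _ [? _ <-].
by apply: filterE => z w [k Kk _]; case: K0; exists k.
Qed.

Lemma CXY_eval_continuous (x : X) : continuous (fun h : C => sval h x).
Proof.
move=> f O; rewrite nbhsE => -[O' [oO' fxO'] O'O].
have : nbhs f [set h : C | sval h @` [set x] `<=` O'].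
  by apply: nbhs_CXY_image_sub => //; [exact: compact_set1 | move=> _ [_ -> <-]].
by apply: filterS => h hxO'; apply/O'O/hxO'; exists x.
Qed.

Lemma induced_mapE {G : topologicalType} {theta : G -> Y -> Y} {A : set Y}
    {g : G} {f : C} :
  {within A, continuous (theta g)} -> (forall x, A (sval f x)) ->
  sval (induced_map theta g f) = theta g \o sval f.
Proof.
move=> thetac Af; rewrite /induced_map; case: pselect => // -[].
by apply: (continuous_within_comp _ Af thetac); exact: CXY_continuous.
Qed.

Lemma induced_map_cst {G : topologicalType} (theta : G -> Y -> Y) g y :
  sval (induced_map theta g (CXY_cst y)) = cst (theta g y).
Proof. by rewrite /induced_map; case: pselect => // -[] x; exact: cvg_cst. Qed.

End compact_open_CXY.

Section pointwise_lift.
Context {G X Y : topologicalType}.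
Local Notation C := (CXY X Y).

Definition pointwise_set (W : set (G * Y)) : set (G * C) :=
  [set p | forall x, W (p.1, sval p.2 x)].

Lemma pa_domain_induced (inv : G -> G) (D : G -> set Y) :
  pa_domain inv (induced_dom D) = pointwise_set (pa_domain inv D).
Proof. by []. Qed.

Lemma open_pointwise_set (W : set (G * Y)) :
  compact [set: X] -> open W -> open (pointwise_set W).
Proof.
move=> cX oW; rewrite openE => -[g f] /= fW.
have cfX := compact_CXY_image f _ cX.
have [U gU [V [oV fXV] UVW]] : exists2 U, nbhs g U &
    exists2 V, open V /\ sval f @` [set: X] `<=` V & U `*` V `<=` W.
  by apply: compact_tube cfX _ => _ [x _ <-]; exact: open_nbhs_nbhs.
exists (U, [set h : C | sval h @` [set: X] `<=` V]) => /=.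
  by split => //; exact: nbhs_CXY_image_sub.
by move=> [g' h] /= [Ug' hXV] x; apply: UVW; split => //; apply: hXV; exists x.
Qed.

Lemma continuous_pair_cst :
  continuous (fun p : G * Y => (p.1, @CXY_cst X Y p.2)).
Proof.
move=> [g y]; apply: (@cvg_pair _ _ _ _ (nbhs g) (nbhs (CXY_cst y))).
  exact: cvg_fst.
have snd_cvg : snd @ nbhs (g, y) --> y := cvg_snd.
by move=> P /(CXY_cst_continuous y) /snd_cvg.
Qed.

Lemma open_of_pointwise_set (x0 : X) (W : set (G * Y)) :
  open (pointwise_set W) -> open W.
Proof.
move=> oW; have -> : W = (fun p => (p.1, @CXY_cst X Y p.2)) @^-1` pointwise_set W.
  by apply/seteqP; split => [[g y] Wgy x | [g y] /(_ x0)].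
by apply: open_comp oW => p _; exact: continuous_pair_cst.
Qed.

End pointwise_lift.

Section induced_partial_action.
Context {G X Y : topologicalType} (inv : G -> G) (D : G -> set Y)
  (theta : G -> Y -> Y).

Lemma pa_continuous_induced :
  compact [set: X] -> (forall g, {within D (inv g), continuous (theta g)}) ->
  open (pa_domain inv D) -> pa_continuous inv D theta ->
  pa_continuous inv (@induced_dom G X Y D) (induced_map theta).
Proof.
move=> cX thetac oD cD.
have oDh : open (pa_domain inv (@induced_dom G X Y D)).
  by rewrite pa_domain_induced; exact: open_pointwise_set.
rewrite /pa_continuous continuous_open_subspace // in cD.
rewrite /pa_continuous continuous_open_subspace // => -[g f]; rewrite inE => Df.
apply: cvg_CXY => K O cK oO.
rewrite /= (induced_mapE (thetac g) Df) => fKO.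
pose W := pa_domain inv D `&` (fun p => theta p.1 p.2) @^-1` O.
have oW : open W by move/(continuous_inP _ oD): cD; apply.
have [U gU [V [oV fKV] UVW]] : exists2 U, nbhs g U &
    exists2 V, open V /\ sval f @` K `<=` V & U `*` V `<=` W.
  apply: compact_tube (compact_CXY_image f K cK) _ => _ [k Kk <-].
  by apply: open_nbhs_nbhs; split => //; split; [exact: Df | apply: fKO; exists k].
have UV : nbhs (g, f) (U `*` [set h : CXY X Y | sval h @` K `<=` V]).
  exists (U, [set h | sval h @` K `<=` V]) => //.
  by split => //; exact: nbhs_CXY_image_sub.
apply: filterS (filterI (open_nbhs_nbhs (conj oDh Df)) UV).
move=> [g' h] [Dh [Ug' hKV]] _ [k Kk <-].
have /UVW [_ Ohk] : (U `*` V) (g', sval h k) by split => //; apply: hKV; exists k.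
by rewrite /= (induced_mapE (thetac g') Dh).
Qed.

Lemma pa_continuous_of_induced (x0 : X) :
  open (pa_domain inv (@induced_dom G X Y D)) ->
  pa_continuous inv (@induced_dom G X Y D) (induced_map theta) ->
  pa_continuous inv D theta.
Proof.
move=> oDh cDh; have oD : open (pa_domain inv D).
  by apply: (open_of_pointwise_set x0); rewrite -pa_domain_induced.
rewrite /pa_continuous continuous_open_subspace // in cDh.
rewrite /pa_continuous continuous_open_subspace // => -[g y]; rewrite inE => Dy.
have -> : (fun p : G * Y => theta p.1 p.2) = (fun h : CXY X Y => sval h x0)
    \o (fun p => induced_map theta p.1 p.2) \o (fun p => (p.1, CXY_cst p.2)).
  by apply/funext => p /=; rewrite induced_map_cst.
apply: continuous_comp; first exact: continuous_pair_cst.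
apply: continuous_comp; first by apply: cDh; rewrite inE.
exact: CXY_eval_continuous.
Qed.

End induced_partial_action.

Theorem proposition3p3 (G : topologicalType) (mul : G -> G -> G)
    (inv : G -> G) (e : G) (Y X : topologicalType)
    (D : G -> set Y) (theta : G -> Y -> Y) :
  topological_group mul inv e ->
  hausdorff_space G ->
  topological_partial_action mul inv e D theta ->
  compact [set: X] -> (exists x : X, True) ->
  (open (pa_domain inv D) <->
     open (pa_domain inv (@induced_dom G X Y D))) /\
  (pa_nice inv D theta <->
     pa_nice inv (@induced_dom G X Y D) (@induced_map G X Y theta)).
Proof.
move=> _ _ tpa cX [x0 _].
have open_iff :
    open (pa_domain inv D) <-> open (pa_domain inv (@induced_dom G X Y D)).
  rewrite pa_domain_induced; split; first exact: open_pointwise_set.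
  exact: open_of_pointwise_set x0 _.
split=> //; split=> -[oD cD]; split; try exact/open_iff.
- exact: pa_continuous_induced cX (pa_cont tpa) oD cD.
- exact: pa_continuous_of_induced x0 oD cD.
Qed.
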